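(* For all integers $n, k \geq 1$ with $n \geq k$, $$\sum_{i=k}^{n} \frac{s(n-1,i-1)\, S(i,k)}{i} = \frac{1}{n}\binom{n}{k} B_{n-k}^*.$$
   Context: For $n \geq 0$, $X^{\underline{n}} := X(X-1)\cdots(X-n+1)$ ($X^{\underline{0}}=1$). The (signed) Stirling numbers of the first kind $s(n,k)$ are defined by $X^{\underline{n}} = \sum_{k=0}^{n} s(n,k) X^k$, and the Stirling numbers of the second kind $S(n,k)$ by $X^n = \sum_{k=0}^{n} S(n,k) X^{\underline{k}}$ (for all $n\ge 0$), with $s(n,k)=S(n,k)=0$ when $n<k$. The Bernoulli numbers of the second kind $B_n^*$ are defined by $\frac{t}{\log(1+t)} = \sum_{n \ge 0} B_n^* \frac{t^n}{n!}$. *)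

From mathcomp Require Import all_boot all_order all_algebra.
Set Implicit Arguments. Unset Strict Implicit. Unset Printing Implicit Defensive.
Import Order.TTheory GRing.Theory Num.Theory.
Local Open Scope ring_scope.

Definition falling (n : nat) : {poly int} := \prod_(i < n) ('X - (i%:Z)%:P).

(* Signed Stirling numbers of the first kind: X^{(n)} = sum_k s(n,k) X^k. *)
Definition stir1 (n k : nat) : int := (falling n)`_k.

(* Stirling numbers of the second kind, via the standard recurrence
   S(0,0)=1, S(0,k+1)=0, S(n+1,0)=0, S(n+1,k+1)=S(n,k)+(k+1)S(n,k+1),
   which is equivalent to X^n = sum_k S(n,k) X^{(k)}. *)
Fixpoint stir2 (n k : nat) : nat :=
  match n, k with
  | 0, 0 => 1
  | 0, _.+1 => 0
  | _.+1, 0 => 0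
  | m.+1, j.+1 => (stir2 m j + j.+1 * stir2 m j.+1)%N
  end.

(* log(1+t)/t = sum_{m>=0} (-1)^m t^m/(m+1); its reciprocal t/log(1+t) has
   coefficients b_n = B_n^*/n!, determined by
   sum_{j=0}^{n} b_j (-1)^(n-j)/(n-j+1) = [n = 0]. *)
Fixpoint bseq (n : nat) : seq rat :=
  match n with
  | 0 => [:: 1]
  | m.+1 => let s := bseq m in
      rcons s (- \sum_(j < m.+1) s`_j * (-1) ^+ (m.+1 - j) / (m.+2 - j)%:R)
  end.

Definition bstar (n : nat) : rat := (n`!)%:R * (bseq n)`_n.

From Pilot Require Import Defs.
From mathcomp Require Import all_boot all_order all_algebra ring zify.
Import Order.TTheory GRing.Theory Num.Theory.
Local Open Scope ring_scope.

(* Write a_k(m) := (1/m!) sum_i s(m,i-1) S(i,k)/i ([stirsum k m]) and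
   L(t) := log(1+t)/t = sum_j (-1)^j t^j/(j+1).  Differentiating
   (1+t)^X = sum_N X^{\underline N} t^N/N! with respect to X gives
   log(1+t) (1+t)^X, so i s(m+1,i)/(m+1)! is the m-th coefficient of
   L(t) sum_r s(r,i-1) t^r/r!.
   Summing against S(i,k)/i and using sum_i s(N,i) S(i,k) = [N = k] yields
   L(t) sum_m a_k(m) t^m = t^(k-1)/k!.  Multiplication by L is injective
   (L(0) = 1) and the inverse of L is t/log(1+t) = sum_n B*_n t^n/n!, hence
   a_k(m) = B*_(m-k+1) / ((m-k+1)! k!); clearing factorials gives the claim. *)

Lemma falling_recr N : falling N.+1 = falling N * ('X - (N%:Z)%:P).
Proof. by rewrite /falling big_ord_recr. Qed.

Lemma size_falling N : size (falling N) = N.+1.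
Proof. by rewrite /falling size_prod_XsubC /index_enum -enumT size_enum_ord. Qed.

Lemma stir1_eq0 N i : (N < i)%N -> stir1 N i = 0.
Proof. by move=> ltNi; rewrite /stir1 nth_default // size_falling. Qed.

Lemma stir10 i : stir1 0 i = (i == 0)%:R.
Proof. by rewrite /stir1 /falling big_ord0 coef1. Qed.

Lemma stir1S N i :
  stir1 N.+1 i = (if i is i'.+1 then stir1 N i' else 0) - N%:Z * stir1 N i.
Proof. by rewrite /stir1 falling_recr mulrBr coefB coefMX coefMC mulrC; case: i. Qed.

Lemma stir2_eq0 i K : (i < K)%N -> stir2 i K = 0%N.
Proof. by elim: i K => [|i IH] [|K] //= ltiK; rewrite !IH ?muln0 // ltnW. Qed.

Lemma natr_fact_neq0 (R : numDomainType) n : n`!%:R != 0 :> R.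
Proof. by rewrite pnatr_eq0 -lt0n fact_gt0. Qed.

Section StirlingOrthogonality.

Variable R : pzRingType.

Lemma sum_stir1S N M (f : nat -> R) :
  \sum_(i < M.+1) (stir1 N.+1 i)%:~R * f i =
  \sum_(i < M) (stir1 N i)%:~R * f i.+1 - (\sum_(i < M.+1) (stir1 N i)%:~R * f i) *+ N.
Proof.
have intrNM z : ((N%:Z * z)%:~R : R) = z%:~R *+ N by rewrite intrM mulr_natl.
rewrite big_ord_recl [in X in _ - X *+ _]big_ord_recl stir1S sub0r intrN intrNM.
under eq_bigr do rewrite stir1S /= intrB intrNM mulrBl mulrnAl.
by rewrite sumrB sumrMnl mulrnDl opprD addrCA mulNr mulrnAl.
Qed.

Lemma stirling_orthogonality N M K : (N < M)%N ->
  \sum_(i < M) (stir1 N i)%:~R * (stir2 i K)%:R = (N == K)%:R :> R.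
Proof.
elim: N M K => [|N IH] [|M] K //= ltNM.
  rewrite big_ord_recl big1 => [|i _]; last by rewrite stir10 mul0r.
  by rewrite stir10 addr0 mul1r; case: K.
rewrite (sum_stir1S _ _ (fun i => (stir2 i K)%:R)) IH 1?ltnW //.
case: K => [|K].
  rewrite big1 => [|i _]; last by rewrite mulr0.
  by case: N {IH ltNM} => [|N]; rewrite sub0r ?mulr0n ?mul0rn oppr0.
under eq_bigr do rewrite /= natrD natrM mulr_natl mulrDr [X in _ + X]mulrnAr.
rewrite big_split sumrMnl /= !IH // eqSS.
case: (eqVneq N K.+1) => [->|_]; last by rewrite !mul0rn addr0 subr0.
by rewrite eqn_leq ltnn add0r subrr.
Qed.

End StirlingOrthogonality.

Definition dfalling_coef (N j : nat) : int :=
  (-1) ^+ j * (j`!)%:R * ('C(N.+1, j.+1))%:R.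

Lemma dfalling_coefS N j :
  dfalling_coef N.+1 j.+1 = dfalling_coef N j.+1 - dfalling_coef N j * (j.+1)%:R.
Proof. by rewrite /dfalling_coef binS factS natrD natrM exprS; ring. Qed.

Lemma dfalling_coef_eq0 N : dfalling_coef N N.+1 = 0.
Proof. by rewrite /dfalling_coef bin_small ?mulr0. Qed.

Lemma falling_mulXsubC r j :
  falling r * ('X - ((r + j)%N%:Z)%:P) = falling r.+1 - j%:Z *: falling r.
Proof.
rewrite falling_recr PoszD polyCD opprD addrA mulrDr -mul_polyC mulrN.
by rewrite [_%:P * falling r]mulrC.
Qed.

Lemma deriv_falling N :
  (falling N.+1)^`() = \sum_(j < N.+1) dfalling_coef N j *: falling (N - j).
Proof.
elim: N => [|N IH].
  by rewrite big_ord1 falling_recr /falling big_ord0 mul1r derivXsubC scale1r.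
have shift_falling (j : 'I_N.+1) :
    dfalling_coef N j *: falling (N - j) * ('X - (N.+1%:Z)%:P) =
    dfalling_coef N j *: falling (N - j).+1
    - (dfalling_coef N j * (j.+1)%:R) *: falling (N - j).
  have -> : N.+1%:Z = (N - j + j.+1)%N by rewrite addnS subnK // -ltnS.
  by rewrite -scalerAl falling_mulXsubC scalerBr scalerA -natz.
rewrite falling_recr derivM derivXsubC mulr1 IH mulr_suml.
rewrite (eq_bigr _ (fun j _ => shift_falling j)) sumrB [in RHS]big_ord_recl.
under [in RHS]eq_bigr => j _ do rewrite /= subSS dfalling_coefS scalerBl.
rewrite sumrB addrAC addrA; congr (_ - _).
rewrite big_ord_recl big_ord_recr /= dfalling_coef_eq0 scale0r addr0 subn0.
under eq_bigr => i _ do rewrite /= subnSK ?ltn_ord //.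
rewrite addrAC; congr (_ + _).
rewrite -{2}(scale1r (falling N.+1)) -scalerDl; congr (_ *: _).
by rewrite /dfalling_coef /= !bin1 !mul1r -[N.+2]addn1 natrD.
Qed.

Lemma stir1_deriv m i : (0 < i)%N ->
  stir1 m.+1 i *+ i = \sum_(j < m.+1) dfalling_coef m j * stir1 (m - j) i.-1.
Proof.
move=> i_gt0; have := congr1 (fun p : {poly int} => p`_i.-1) (deriv_falling m).
by rewrite /= coef_deriv prednK // coef_sum => ->; apply: eq_bigr => j _; rewrite coefZ.
Qed.

Definition log_coef (j : nat) : rat := (-1) ^+ j / j.+1%:R.

(* [log_conv x] is the coefficient sequence of L(t) * sum_m x m t^m. *)
Definition log_conv (x : nat -> rat) (m : nat) : rat :=
  \sum_(j < m.+1) log_coef j * x (m - j)%N.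

Lemma log_conv_stir1 m i : (0 < i)%N ->
  log_conv (fun r => (stir1 r i.-1)%:~R / (r`!)%:R) m =
  i%:R * (stir1 m.+1 i)%:~R / (m.+1)`!%:R.
Proof.
move=> i_gt0.
rewrite mulr_natl -rmorphMn stir1_deriv // rmorph_sum mulr_suml.
apply: eq_bigr => j _.
have fact_split : (m.+1)`!%:R =
    'C(m.+1, j.+1)%:R * j.+1%:R * j`!%:R * (m - j)`!%:R :> rat.
  by rewrite -!natrM -(bin_fact (ltn_ord j)) subSS factS !mulnA.
have bin_nz : 'C(m.+1, j.+1)%:R != 0 :> rat by rewrite pnatr_eq0 -lt0n bin_gt0.
rewrite fact_split /log_coef /dfalling_coef !rmorphM rmorph_sign !rmorph_nat.
by field; rewrite !natr_fact_neq0 bin_nz addrC natr1 pnatr_eq0.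
Qed.

Lemma log_conv_inj x y : log_conv x =1 log_conv y -> x =1 y.
Proof.
move=> eq_xy m; elim/ltn_ind: m => m IH.
have := eq_xy m; rewrite /log_conv !big_ord_recl subn0 {1 3}/log_coef expr0 divr1 !mul1r.
rewrite (eq_bigr (fun j : 'I_m => log_coef j.+1 * y (m - j.+1)%N)) => [|j _].
  by move/addIr.
by rewrite lift0 IH //; have := ltn_ord j; lia.
Qed.

Lemma sum_ord_trunc (V : nmodType) n M (F : nat -> V) : (n <= M)%N ->
  (forall i, (n <= i < M)%N -> F i = 0) -> \sum_(i < M) F i = \sum_(i < n) F i.
Proof.
move=> le_nM F_eq0; rewrite (big_ord_widen _ _ le_nM) [RHS]big_mkcond.
apply: eq_bigr => i _; case: ltnP => // le_ni.
by rewrite F_eq0 // le_ni ltn_ord.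
Qed.

Lemma log_conv_shift x K m :
  log_conv (fun r => if (K <= r)%N then x (r - K)%N else 0) m =
  if (K <= m)%N then log_conv x (m - K) else 0.
Proof.
rewrite /log_conv; case: leqP => [le_Km | lt_mK]; last first.
  by rewrite big1 // => j _; rewrite ifN ?mulr0 // -ltnNge (leq_ltn_trans (leq_subr _ _)).
rewrite (sum_ord_trunc _ (m - K).+1 _
  (fun j => log_coef j * if (K <= m - j)%N then x (m - j - K)%N else 0)); first 1 last.
- by rewrite ltnS leq_subr.
- by move=> j /andP[? ?]; rewrite ifN ?mulr0 // -ltnNge; lia.
apply: eq_bigr => j _; have lt_j := ltn_ord j.
by rewrite ifT; [congr (_ * x _) | ]; lia.
Qed.

Definition bcoef (n : nat) : rat := (Defs.bseq n)`_n.

Lemma size_bseq n : size (Defs.bseq n) = n.+1.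
Proof. by elim: n => [|n IH] //=; rewrite size_rcons IH. Qed.

Lemma nth_bseq n j : (j <= n)%N -> (Defs.bseq n)`_j = bcoef j.
Proof.
elim: n => [|n IH] le_jn; first by case: j le_jn.
case: (eqVneq j n.+1) => [-> //|ne_jn].
have le_j : (j <= n)%N by rewrite -ltnS ltn_neqAle ne_jn.
by rewrite /= nth_rcons size_bseq ltnS le_j IH.
Qed.

Lemma log_conv_bcoef N : log_conv bcoef N = (N == 0)%:R.
Proof.
rewrite /log_conv (reindex_inj rev_ord_inj) /=.
under eq_bigr => j _ do rewrite subSS subKn -1?ltnS // /log_coef mulrC mulrA.
case: N => [|N]; first by rewrite big_ord1 /bcoef /= !mulr1.
rewrite big_ord_recr /= subnn mulr1 divr1 [bcoef N.+1]/bcoef /= nth_rcons size_bseq.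
rewrite ltnn eqxx; apply/eqP; rewrite subr_eq0; apply/eqP/eq_bigr => j _.
have le_jN : (j <= N)%N by rewrite -ltnS.
by rewrite nth_bseq // [(N.+2 - j)%N]subSn // leqW.
Qed.

Definition stirsum (K m : nat) : rat :=
  (m`!%:R)^-1 * \sum_(i < m.+2) (stir1 m i.-1)%:~R * (stir2 i K)%:R / i%:R.

Lemma stirsum_widen K m M : (m.+2 <= M)%N -> stirsum K m =
  (m`!%:R)^-1 * \sum_(i < M) (stir1 m i.-1)%:~R * (stir2 i K)%:R / i%:R.
Proof.
move=> le_mM; rewrite /stirsum (sum_ord_trunc _ _ _
  (fun i => (stir1 m i.-1)%:~R * (stir2 i K)%:R / i%:R) le_mM) // => -[|i] //.
by case/andP=> lt_mi _; rewrite stir1_eq0 ?mul0r.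
Qed.

Lemma sum_stir2_geq_stirsum K m :
  \sum_(K <= i < m.+2) (stir1 m i.-1)%:~R * (stir2 i K)%:R / i%:R =
  m`!%:R * stirsum K m.
Proof.
rewrite /stirsum mulrA mulfV ?natr_fact_neq0 // mul1r.
rewrite (@big_nat_widenl _ _ _ K 0) // big_mkord big_mkcond.
apply: eq_bigr => i _; case: leqP => // lt_iK.
by rewrite stir2_eq0 // mulr0 mul0r.
Qed.

Lemma log_conv_stirsum K m : log_conv (stirsum K.+1) m = (m == K)%:R / K.+1`!%:R.
Proof.
have le_m2 (j : 'I_m.+1) : ((m - j).+2 <= m.+2)%N by rewrite !ltnS leq_subr.
rewrite /log_conv.
under eq_bigr => j _ do rewrite (stirsum_widen _ _ _ (le_m2 j)) mulrA mulr_sumr.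
rewrite exchange_big /=.
have inner (i : 'I_m.+2) :
    \sum_(j < m.+1) log_coef j * ((m - j)`!%:R)^-1 *
      ((stir1 (m - j) i.-1)%:~R * (stir2 i K.+1)%:R / i%:R) =
    (stir1 m.+1 i)%:~R * (stir2 i K.+1)%:R / (m.+1)`!%:R.
  case: (posnP i) => [-> | i_gt0].
    by rewrite big1 => [|j _] /=; rewrite !mulr0 ?mul0r.
  have i_nz : i%:R != 0 :> rat by rewrite pnatr_eq0 -lt0n.
  transitivity ((stir2 i K.+1)%:R / i%:R *
      log_conv (fun r => (stir1 r i.-1)%:~R / (r`!)%:R) m).
    by rewrite /log_conv mulr_sumr; apply: eq_bigr => j _; ring.
  by rewrite log_conv_stir1 //; field; rewrite i_nz natr_fact_neq0.
rewrite (eq_bigr _ (fun i _ => inner i)) -mulr_suml stirling_orthogonality //.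
by rewrite eqSS; case: eqP => [-> | _]; rewrite ?mul0r.
Qed.

Lemma stirsum_bcoef K m :
  stirsum K.+1 m = if (K <= m)%N then bcoef (m - K) / K.+1`!%:R else 0.
Proof.
move: m; apply: (log_conv_inj _
  (fun m => if (K <= m)%N then bcoef (m - K) / K.+1`!%:R else 0)) => m.
rewrite log_conv_stirsum (log_conv_shift (fun r => bcoef r / K.+1`!%:R) K m).
case: leqP => [le_Km | lt_mK]; last by rewrite ltn_eqF ?mul0r.
rewrite eqn_leq le_Km andbT -subn_eq0 -log_conv_bcoef /log_conv mulr_suml.
by apply: eq_bigr => j _; rewrite mulrA.
Qed.

Theorem theorem4 (n k : nat) (hk : (1 <= k)%N) (hkn : (k <= n)%N) :
  \sum_(k <= i < n.+1)
     ((stir1 (n.-1) (i.-1))%:~R * (stir2 i k)%:R / (i%:R : rat))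
  = (n%:R)^-1 * ('C(n, k))%:R * bstar (n - k).
Proof.
case: k hk hkn => // K _; case: n => // m le_Km1; have le_Km : (K <= m)%N by [].
rewrite sum_stir2_geq_stirsum.
have binE : 'C(m.+1, K.+1)%:R = (m.+1)`!%:R / (K.+1`!%:R * (m - K)`!%:R) :> rat.
  rewrite -(bin_fact le_Km1) subSS natrM (natrM _ K.+1`!).
  by rewrite mulfK // mulf_neq0 ?natr_fact_neq0.
rewrite stirsum_bcoef le_Km /bstar subSS -/(bcoef _) binE (factS m) (natrM _ m.+1).
by field; rewrite !natr_fact_neq0 addrC natr1 pnatr_eq0.
Qed.
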